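(* Let $\mathcal T=\boxtimes ABCD$ be a (nondegenerate) tetrahedron. The following are equivalent: (1) $\mathcal T$ has an obtuse path; (2) there exists a point $O\in\operatorname{int}\mathcal T$ such that $(\mathcal T,O)$ is monostable; (3) for every face $F$ of $\mathcal T$ there exists a point $O_F\in\operatorname{int}\mathcal T$ such that $(\mathcal T,O_F)$ is monostable with its unique stable equilibrium on $F$.
   Context: A weighted polyhedron is a pair $(\mathcal P,O)$ with $\mathcal P$ a convex polyhedron and $O\in\operatorname{int}\mathcal P$ (thought of as the center of mass; no other restriction on $O$). $(\mathcal P,O)$ is in equilibrium on a face, edge or vertex $X$ if there exists $Q$ in the relative interior of $X$ (a vertex is its own relative interior) such that the plane perpendicular to the segment $[O,Q]$ at $Q$ supports $\mathcal P$. The equilibrium is stable if $X$ is a face, unstable if $X$ is a vertex. $(\mathcal P,O)$ is monostable if it has exactly one stable equilibrium (exactly one face carries an equilibrium). A tetrahedron has an obtuse path if, for some labelling $A,B,C,D$ of its vertices, the three edges $\overline{AB},\overline{BC},\overline{CD}$ all have obtuse dihedral angles (i.e. three edges with obtuse dihedral angles having no common vertex). *)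

From HB Require Import structures.
From mathcomp Require Import all_boot all_order all_algebra.
From mathcomp Require Import reals trigo.
Set Implicit Arguments. Unset Strict Implicit. Unset Printing Implicit Defensive.
Import Order.TTheory GRing.Theory Num.Theory.
Local Open Scope ring_scope.

Section Defs.
Variable R : realType.
Local Notation pt := 'rV[R]_3.

Definition dot (u v : pt) : R := (u *m v^T) 0 0.
Definition vnorm (u : pt) : R := Num.sqrt (dot u u).

Definition tetra_nondegenerate (V : 'I_4 -> pt) : Prop :=
  \det (\matrix_(i < 3, j < 3) (V (lift ord0 i) - V ord0) 0 j) != 0.

Definition in_tetra (V : 'I_4 -> pt) (P : pt) : Prop :=
  exists w : 'I_4 -> R, (forall i, 0 <= w i) /\ \sum_i w i = 1 /\
    P = \sum_i w i *: V i.

Definition in_interior (V : 'I_4 -> pt) (P : pt) : Prop :=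
  exists w : 'I_4 -> R, (forall i, 0 < w i) /\ \sum_i w i = 1 /\
    P = \sum_i w i *: V i.

(* The faces of the tetrahedron are indexed by the opposite vertex f;
   P belongs to the relative interior of the face opposite to f. *)
Definition in_face_relint (V : 'I_4 -> pt) (f : 'I_4) (P : pt) : Prop :=
  exists w : 'I_4 -> R, (forall i, i != f -> 0 < w i) /\ w f = 0 /\
    \sum_i w i = 1 /\ P = \sum_i w i *: V i.

Definition perp_plane_supports (V : 'I_4 -> pt) (O Q : pt) : Prop :=
  O != Q /\ in_tetra V Q /\
  ((forall P, in_tetra V P -> dot (P - Q) (Q - O) <= 0) \/
   (forall P, in_tetra V P -> 0 <= dot (P - Q) (Q - O))).

(* (T, O) is in (stable) equilibrium on the face opposite to f *)
Definition equilibrium_on_face (V : 'I_4 -> pt) (O : pt) (f : 'I_4) : Prop :=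
  exists Q, in_face_relint V f Q /\ perp_plane_supports V O Q.

Definition monostable_on (V : 'I_4 -> pt) (O : pt) (f : 'I_4) : Prop :=
  forall g, equilibrium_on_face V O g <-> g = f.

Definition monostable (V : 'I_4 -> pt) (O : pt) : Prop :=
  exists f, monostable_on V O f.

Definition perp_comp (e u : pt) : pt := u - (dot u e / dot e e) *: e.

Definition dihedral_angle (V : 'I_4 -> pt) (a b c d : 'I_4) : R :=
  let e := V b - V a in
  let u := perp_comp e (V c - V a) in
  let v := perp_comp e (V d - V a) in
  acos (dot u v / (vnorm u * vnorm v)).

Definition obtuse_edge (V : 'I_4 -> pt) (a b c d : 'I_4) : Prop :=
  pi / 2 < dihedral_angle V a b c d.

(* labelling A,B,C,D = V a, V b, V c, V d with AB, BC, CD obtuse *)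
Definition has_obtuse_path (V : 'I_4 -> pt) : Prop :=
  exists a b c d : 'I_4, uniq [:: a; b; c; d] /\
    obtuse_edge V a b c d /\ obtuse_edge V b c a d /\ obtuse_edge V c d a b.

End Defs.

(* Write [grad i] for the gradient of the [i]-th barycentric coordinate, an
   inward normal of the face opposite to [V i], and [gram] for the Gram matrix
   of these normals.  The dihedral angle at an edge is obtuse iff [gram] is
   positive on the two faces meeting there, so an obtuse path A B C D is a
   Hamiltonian path C D A B in the graph of faces linked along obtuse edges.
   For [O] with barycentric coordinates [w], face [i] carries an equilibrium
   iff the foot of the perpendicular from [O] to its plane lies in its relative
   interior, i.e. [w i * gram i j < w j * gram i i] for [j != i].  If [f] is
   the only such face, every other face has a neighbour across an obtuse edge
   strictly closer to [O]; these three edges form a spanning tree, which is a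
   path because the rows of [gram] sum to zero, so that no face has three
   obtuse edges.  Conversely, along a Hamiltonian path, barycentric weights
   [K ^+ (distance to f along the path)] with [K] large make [f] the only
   equilibrium face. *)

From HB Require Import structures.
From mathcomp Require Import all_boot all_order all_algebra.
From mathcomp Require Import reals trigo.
From mathcomp Require Import ring lra.
Set Implicit Arguments. Unset Strict Implicit. Unset Printing Implicit Defensive.
Import Order.TTheory GRing.Theory Num.Theory.
Local Open Scope ring_scope.

Section DotProduct.
Variable R : realType.
Implicit Types (u v w : 'rV[R]_3) (a : R).

Lemma dotE u v : dot u v = \sum_j u 0 j * v 0 j.
Proof. by rewrite /dot !mxE; apply: eq_bigr => j _; rewrite mxE. Qed.

Lemma dotC u v : dot u v = dot v u.
Proof. by rewrite !dotE; apply: eq_bigr => j _; rewrite mulrC. Qed.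

Lemma dotDl u v w : dot (u + v) w = dot u w + dot v w.
Proof. by rewrite !dotE -big_split; apply: eq_bigr => j _; rewrite mxE mulrDl. Qed.

Lemma dotZl a u v : dot (a *: u) v = a * dot u v.
Proof. by rewrite !dotE mulr_sumr; apply: eq_bigr => j _; rewrite mxE mulrA. Qed.

Lemma dotNl u v : dot (- u) v = - dot u v.
Proof. by rewrite -scaleN1r dotZl mulN1r. Qed.

Lemma dotBl u v w : dot (u - v) w = dot u w - dot v w.
Proof. by rewrite dotDl dotNl. Qed.

Lemma dot0l v : dot 0 v = 0.
Proof. by rewrite -(scale0r 0) dotZl mul0r. Qed.

Lemma dotDr u v w : dot w (u + v) = dot w u + dot w v.
Proof. by rewrite !(dotC w) dotDl. Qed.

Lemma dotZr a u v : dot v (a *: u) = a * dot v u.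
Proof. by rewrite !(dotC v) dotZl. Qed.

Lemma dotNr u v : dot v (- u) = - dot v u.
Proof. by rewrite !(dotC v) dotNl. Qed.

Lemma dotBr u v w : dot w (u - v) = dot w u - dot w v.
Proof. by rewrite !(dotC w) dotBl. Qed.

Lemma dot0r v : dot v 0 = 0.
Proof. by rewrite dotC dot0l. Qed.

Lemma dot_suml (I : Type) (r : seq I) (P : pred I) (F : I -> 'rV[R]_3) v :
  dot (\sum_(i <- r | P i) F i) v = \sum_(i <- r | P i) dot (F i) v.
Proof. exact: (big_morph (fun x => dot x v) (fun x y => dotDl x y v) (dot0l v)). Qed.

Lemma dot_sumr (I : Type) (r : seq I) (P : pred I) (F : I -> 'rV[R]_3) v :
  dot v (\sum_(i <- r | P i) F i) = \sum_(i <- r | P i) dot v (F i).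
Proof. by rewrite dotC dot_suml; apply: eq_bigr => i _; rewrite dotC. Qed.

Lemma dotxx_ge0 u : 0 <= dot u u.
Proof. by rewrite dotE sumr_ge0 // => j _; rewrite -expr2 sqr_ge0. Qed.

Lemma dotxx_eq0 u : (dot u u == 0) = (u == 0).
Proof.
apply/idP/eqP => [|->]; last by rewrite dot0l.
rewrite dotE psumr_eq0 => [/allP u0|j _]; last by rewrite -expr2 sqr_ge0.
apply/rowP => j; apply/eqP; rewrite !mxE -[_ == 0]orbb -mulf_eq0.
exact: u0 (mem_index_enum j).
Qed.

Lemma dotxx_gt0 u : (0 < dot u u) = (u != 0).
Proof. by rewrite lt_def dotxx_ge0 dotxx_eq0 andbT. Qed.

Lemma dot_cs_residual u v :
  dot (dot v v *: u - dot u v *: v) (dot v v *: u - dot u v *: v) =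
  dot v v * (dot u u * dot v v - dot u v ^+ 2).
Proof. by rewrite !(dotBl, dotBr, dotZl, dotZr) (dotC v u); ring. Qed.

Lemma dot_cs u v : dot u v ^+ 2 <= dot u u * dot v v.
Proof.
have [->|v0] := eqVneq v 0; first by rewrite !dot0r expr0n mulr0.
have := dotxx_ge0 (dot v v *: u - dot u v *: v).
by rewrite dot_cs_residual pmulr_rge0 ?dotxx_gt0 // subr_ge0.
Qed.

End DotProduct.

Section Ordinal4.
Implicit Types (a b c d x : 'I_4) (s : seq 'I_4).

Lemma mem_uniq4 a b c d x : uniq [:: a; b; c; d] -> x \in [:: a; b; c; d].
Proof.
move=> /card_uniqP card4; suff -> : [:: a; b; c; d] =i 'I_4 by [].
by apply/subset_cardP; [rewrite card4 card_ord | apply/subsetP].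
Qed.

Lemma exists_notin s : (size s < 4)%N -> exists x, x \notin s.
Proof.
move=> size_s; apply/existsP; rewrite -negb_forall; apply: contraL size_s.
move=> /forallP all_in; rewrite -leqNgt.
apply: leq_trans (card_size s); rewrite -[X in (X <= _)%N](card_ord 4).
by apply/subset_leq_card/subsetP => x _.
Qed.

Lemma uniq4_perm a b c d s :
  uniq [:: a; b; c; d] -> (forall p : pred 'I_4, count p s = count p [:: a; b; c; d]) ->
  uniq s.
Proof. by move=> u /permP /perm_uniq ->. Qed.

Lemma big_uniq4 (T : nmodType) (F : 'I_4 -> T) a b c d :
  uniq [:: a; b; c; d] -> \sum_i F i = F a + F b + F c + F d.
Proof.
move=> u; have -> : \sum_i F i = \sum_(i <- [:: a; b; c; d]) F i.
  by rewrite [RHS]big_uniq //; apply: eq_bigl => x; rewrite mem_uniq4.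
by rewrite !big_cons big_nil addr0 !addrA.
Qed.

Lemma fun_uniq4 (T : Type) a b c d (ya yb yc yd : T) : uniq [:: a; b; c; d] ->
  exists h : 'I_4 -> T, [/\ h a = ya, h b = yb, h c = yc & h d = yd].
Proof.
rewrite /= !inE !negb_or => /and4P[/and3P[ab ac ad] /andP[bc bd] cd _].
exists (fun x => if x == a then ya else if x == b then yb else if x == c then yc else yd).
by rewrite eqxx !(eq_sym _ a) (negPf ab) (negPf ac) (negPf ad) eqxx
  !(eq_sym _ b) (negPf bc) (negPf bd) eqxx (eq_sym d) (negPf cd).
Qed.

End Ordinal4.

Section DualBasis.
Variables (R : realType) (V : 'I_4 -> 'rV[R]_3).
Hypothesis nd : tetra_nondegenerate V.

Definition edge_mx := \matrix_(i < 3, j < 3) (V (lift ord0 i) - V ord0) 0 j.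

Let edge_dual (k : 'I_3) := (col k (invmx edge_mx))^T.

Definition grad (i : 'I_4) : 'rV[R]_3 :=
  if unlift ord0 i is Some k then edge_dual k else - \sum_k edge_dual k.

Lemma edge_mx_unit : edge_mx \in unitmx.
Proof. by rewrite unitmxE unitfE. Qed.

Let dot_edge_dual (i k : 'I_3) :
  dot (V (lift ord0 i) - V ord0) (edge_dual k) = (i == k)%:R.
Proof.
have := congr1 (fun A : 'M[R]_3 => A i k) (mulmxV edge_mx_unit).
by rewrite !mxE => <-; rewrite dotE; apply: eq_bigr => j _; rewrite !mxE.
Qed.

Let dot_grad0 (i j : 'I_4) :
  dot (V i - V ord0) (grad j) = (i == j)%:R - (ord0 == j)%:R.
Proof.
case: (unliftP ord0 i) => [i'|] ->; last by rewrite subrr dot0l subrr.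
case: (unliftP ord0 j) => [j'|] ->; rewrite /grad ?liftK ?unlift_none.
  by rewrite dot_edge_dual (inj_eq lift_inj) (negPf (neq_lift _ _)) subr0.
rewrite dotNr dot_sumr (eq_bigr _ (fun k _ => dot_edge_dual i' k)) (bigD1 i') //=.
rewrite eqxx big1 ?addr0 => [|k]; last by rewrite eq_sym => /negPf ->.
by rewrite sub0r.
Qed.

Lemma dot_grad (a b j : 'I_4) :
  dot (V a - V b) (grad j) = (a == j)%:R - (b == j)%:R.
Proof.
have -> : V a - V b = (V a - V ord0) - (V b - V ord0) by rewrite opprB addrA subrK.
by rewrite dotBl !dot_grad0 opprB addrA subrK.
Qed.

Lemma sum_grad : \sum_i grad i = 0.
Proof.
rewrite big_ord_recl /grad unlift_none.
by under [X in _ + X]eq_bigr => k _ do rewrite liftK; rewrite addNr.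
Qed.

Let edge_coords0 (x : 'rV[R]_3) :
  x = \sum_(k < 3) dot x (V (lift ord0 k) - V ord0) *: edge_dual k.
Proof.
have inv_tr : x *m edge_mx^T *m (invmx edge_mx)^T = x.
  by rewrite -mulmxA -trmx_mul mulVmx ?edge_mx_unit // trmx1 mulmx1.
rewrite -{1}inv_tr mulmx_sum_row; apply: eq_bigr => k _; congr (_ *: _).
  by rewrite dotE mxE; apply: eq_bigr => j _; rewrite !mxE.
by rewrite /edge_dual tr_col.
Qed.

Lemma edge_coords (x : 'rV[R]_3) (a : 'I_4) :
  x = \sum_i dot x (V i - V a) *: grad i.
Proof.
have -> : \sum_i dot x (V i - V a) *: grad i =
    \sum_i dot x (V i - V ord0) *: grad i + dot x (V ord0 - V a) *: \sum_i grad i.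
  rewrite scaler_sumr -big_split; apply: eq_bigr => i _ /=.
  by rewrite -scalerDl -dotDr addrA subrK.
rewrite sum_grad scaler0 addr0 big_ord_recl subrr dot0r scale0r add0r.
by rewrite {1}[x]edge_coords0; apply: eq_bigr => k _; rewrite /grad liftK.
Qed.

End DualBasis.

Lemma affine_sum (K : pzRingType) (M : lmodType K) (I : finType) (w : I -> K)
    (v : I -> M) x :
  \sum_i w i = 1 -> \sum_i w i *: (v i - x) = \sum_i w i *: v i - x.
Proof.
by move=> w1; rewrite (eq_bigr _ (fun i _ => scalerBr _ _ _)) sumrB -scaler_suml w1 scale1r.
Qed.

Lemma finite_ubound (R : realDomainType) (T : finType) (F : T -> R) :
  exists2 M, 0 <= M & forall x, F x <= M.
Proof.
exists (\sum_x `|F x|); first exact: sumr_ge0.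
move=> x; apply: le_trans (ler_norm _) _.
by rewrite (bigD1 x) //= lerDl sumr_ge0.
Qed.

Section Barycentric.
Variables (R : realType) (V : 'I_4 -> 'rV[R]_3).
Hypothesis nd : tetra_nondegenerate V.
Local Notation grad := (grad V).

Definition bary (P : 'rV[R]_3) (i : 'I_4) : R :=
  dot (P - V ord0) (grad i) + (ord0 == i)%:R.

Lemma dot_grad_bary P Q i : dot (P - Q) (grad i) = bary P i - bary Q i.
Proof.
rewrite /bary opprD addrACA subrr addr0 -dotBl.
by rewrite opprB addrA subrK.
Qed.

Lemma bary_sum P : \sum_i bary P i = 1.
Proof.
rewrite /bary big_split /= -dot_sumr sum_grad dot0r add0r (bigD1 ord0) //=.
by rewrite big1 ?addr0 // => i; rewrite eq_sym => /negPf ->.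
Qed.

Lemma grad_orth_eq0 x : (forall i, dot x (grad i) = 0) -> x = 0.
Proof.
move=> x_orth; apply/eqP; rewrite -dotxx_eq0 {2}(edge_coords nd x ord0) dot_sumr.
by rewrite big1 // => i _; rewrite dotZr dotC x_orth mulr0.
Qed.

Lemma bary_combP (w : 'I_4 -> R) P : \sum_i w i = 1 ->
  P = \sum_i w i *: V i <-> forall i, bary P i = w i.
Proof.
move=> w1; have bary_comb i : bary (\sum_k w k *: V k) i = w i.
  rewrite /bary -affine_sum // dot_suml.
  under eq_bigr => k _ do rewrite dotZl (dot_grad nd) mulrBr.
  rewrite sumrB -mulr_suml w1 mul1r subrK (bigD1 i) //= eqxx mulr1.
  by rewrite big1 ?addr0 // => k /negPf ->; rewrite mulr0.
split => [-> //| bP]; apply/eqP; rewrite -subr_eq0; apply/eqP/grad_orth_eq0 => i.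
by rewrite dot_grad_bary bary_comb bP subrr.
Qed.

Lemma bary_rec P : P = \sum_i bary P i *: V i.
Proof. exact/(bary_combP _ (bary_sum P)). Qed.

Lemma bary_vertex k i : bary (V k) i = (k == i)%:R.
Proof. by rewrite /bary (dot_grad nd) subrK. Qed.

Lemma in_tetraP P : in_tetra V P <-> forall i, 0 <= bary P i.
Proof.
split => [[w [w_ge0 [w1 /(bary_combP _ w1) bP]]] i | bP]; first by rewrite bP.
by exists (bary P); split => //; split; [exact: bary_sum | exact: bary_rec].
Qed.

Lemma in_interiorP P : in_interior V P <-> forall i, 0 < bary P i.
Proof.
split => [[w [w_gt0 [w1 /(bary_combP _ w1) bP]]] i | bP]; first by rewrite bP.
by exists (bary P); split => //; split; [exact: bary_sum | exact: bary_rec].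
Qed.

Lemma in_face_relintP f P :
  in_face_relint V f P <-> bary P f = 0 /\ forall i, i != f -> 0 < bary P i.
Proof.
split => [[w [w_gt0 [wf [w1 /(bary_combP _ w1) bP]]]] | [bPf bP]].
  by split => [|i /w_gt0]; rewrite bP.
exists (bary P); do !split => //; [exact: bary_sum | exact: bary_rec].
Qed.

Lemma vertex_in_tetra k : in_tetra V (V k).
Proof. by apply/in_tetraP => i; rewrite bary_vertex ler0n. Qed.

End Barycentric.

Section Gram.
Variables (R : realType) (V : 'I_4 -> 'rV[R]_3).
Hypothesis nd : tetra_nondegenerate V.
Local Notation grad := (grad V).

Definition gram (i j : 'I_4) : R := dot (grad i) (grad j).

Lemma gram_sym i j : gram i j = gram j i.
Proof. exact: dotC. Qed.

Lemma grad_neq0 i : grad i != 0.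
Proof.
have [b] := @exists_notin [:: i] isT; rewrite inE => bi.
apply: contraNneq (oner_neq0 R) => gi0.
have := dot_grad nd i b i; rewrite gi0 dot0r eqxx (negPf bi) subr0.
by move/esym/eqP.
Qed.

Lemma gram_gt0 i : 0 < gram i i.
Proof. by rewrite dotxx_gt0 grad_neq0. Qed.

Lemma gram_row_sum i : \sum_j gram i j = 0.
Proof. by rewrite -dot_sumr sum_grad dot0r. Qed.

Lemma gram_cs i j : i != j -> gram i j ^+ 2 < gram i i * gram j j.
Proof.
move=> ij; have [m] := @exists_notin [:: j; i] isT.
rewrite !inE negb_or => /andP[mj mi].
have z_edge : dot (gram j j *: grad i - gram i j *: grad j) (V i - V m) = gram j j.
  rewrite dotBl !dotZl !(dotC (grad _)) !(dot_grad nd) eqxx (negPf ij).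
  by rewrite (negPf mi) (negPf mj) !subr0 mulr1 mulr0 subr0.
have z0 : gram j j *: grad i - gram i j *: grad j != 0.
  by apply: contraTneq (gram_gt0 j) => z0; rewrite -z_edge z0 dot0l ltxx.
move: z0; rewrite -dotxx_gt0 /gram dot_cs_residual pmulr_rgt0 ?subr_gt0 //.
exact: gram_gt0 j.
Qed.

Lemma gram_offdiag_not_pos i : ~ (forall j, j != i -> 0 < gram i j).
Proof.
move=> pos; have := gram_row_sum i; rewrite (bigD1 i) //=; apply/eqP.
by rewrite gt_eqF // ltr_wpDr ?gram_gt0 // sumr_ge0 // => j /pos/ltW.
Qed.

End Gram.

Section Angles.
Variable R : realType.
Implicit Types (u v e : 'rV[R]_3).

Lemma acos_gt_pihalf (t : R) : -1 <= t <= 1 -> (pi / 2 < acos t) = (t < 0).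
Proof.
move=> t_bound; have pi_gt0 := pi_gt0 R.
have acos_itv : acos t \in `[0, pi] by rewrite in_itv /= acos_ge0 ?acos_lepi.
have pihalf_itv : pi / 2 \in `[0, (pi : R)] by rewrite in_itv /=; apply/andP; split; lra.
by rewrite -(ltr_cos pihalf_itv acos_itv) acosK ?cos_pihalf.
Qed.

Lemma obtuse_angleE u v : u != 0 -> v != 0 ->
  (pi / 2 < acos (dot u v / (vnorm u * vnorm v))) = (dot u v < 0).
Proof.
rewrite -!dotxx_gt0 => uu_gt0 vv_gt0.
have norm_gt0 : 0 < vnorm u * vnorm v by rewrite mulr_gt0 ?sqrtr_gt0.
rewrite acos_gt_pihalf ?pmulr_llt0 ?invr_gt0 //.
rewrite -ler_norml normrM normfV (ger0_norm (ltW norm_gt0)) ler_pdivrMr // mul1r.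
rewrite -sqrtr_sqr /vnorm -sqrtrM ?dotxx_ge0 // ler_sqrt ?mulr_ge0 ?dotxx_ge0 //.
exact: dot_cs.
Qed.

Lemma perp_comp_orth e u : e != 0 -> dot (perp_comp e u) e = 0.
Proof.
by rewrite -dotxx_gt0 => ee_gt0; rewrite dotBl dotZl mulfVK ?subrr // gt_eqF.
Qed.

Lemma dot_perp_comp e u y : dot e y = 0 -> dot (perp_comp e u) y = dot u y.
Proof. by move=> ey; rewrite dotBl dotZl ey mulr0 subr0. Qed.

End Angles.

Section ObtuseEdges.
Variables (R : realType) (V : 'I_4 -> 'rV[R]_3).
Hypothesis nd : tetra_nondegenerate V.
Local Notation grad := (grad V).
Local Notation gram := (gram V).

Lemma edge_orth_decomp a b c d x : uniq [:: a; b; c; d] -> dot x (V b - V a) = 0 ->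
  x = dot x (V c - V a) *: grad c + dot x (V d - V a) *: grad d.
Proof.
move=> u xe; rewrite {1}(edge_coords nd x a) (big_uniq4 _ u) xe subrr dot0r.
by rewrite !scale0r !add0r.
Qed.

(* [x] lies in the span of [grad c] and [grad d]; solving the 2x2 Gram system
   given by its inner products with them yields its coordinate on [grad d]. *)
Lemma edge_orth_dual a b c d x : uniq [:: a; b; c; d] -> dot x (V b - V a) = 0 ->
  dot x (grad c) = 1 -> dot x (grad d) = 0 ->
  dot x (V d - V a) * (gram c c * gram d d - gram c d ^+ 2) = - gram c d.
Proof.
move=> u xe xc xd; have x_eq := edge_orth_decomp u xe.
set alpha := dot x (V c - V a) in x_eq; set beta := dot x (V d - V a) in x_eq *.
have xc' : dot x (grad c) = alpha * gram c c + beta * gram c d.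
  by rewrite {1}x_eq dotDl !dotZl (dotC (grad d)).
have xd' : dot x (grad d) = alpha * gram c d + beta * gram d d.
  by rewrite {1}x_eq dotDl !dotZl.
have -> : - gram c d = - gram c d * dot x (grad c) + gram c c * dot x (grad d).
  by rewrite xc xd mulr1 mulr0 addr0.
by rewrite xc' xd'; ring.
Qed.

Lemma obtuse_edgeE a b c d :
  uniq [:: a; b; c; d] -> obtuse_edge V a b c d <-> 0 < gram c d.
Proof.
move=> u; have := u; rewrite /= !inE !negb_or.
move=> /and4P[/and3P[ab ac ad] /andP[bc bd] cd _].
rewrite /obtuse_edge /dihedral_angle.
set e := V b - V a; set uc := perp_comp e _; set ud := perp_comp e _.
have e_b : dot e (grad b) = 1 by rewrite (dot_grad nd) eqxx (negPf ab) subr0.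
have e_c : dot e (grad c) = 0 by rewrite (dot_grad nd) (negPf bc) (negPf ac) subrr.
have e_d : dot e (grad d) = 0 by rewrite (dot_grad nd) (negPf bd) (negPf ad) subrr.
have neq0 x j : dot x (grad j) = 1 -> x != 0.
  by apply: contra_eqN => /eqP ->; rewrite dot0l eq_sym oner_eq0.
have uc_e : dot uc e = 0 by rewrite perp_comp_orth // (neq0 _ _ e_b).
have uc_c : dot uc (grad c) = 1.
  by rewrite dot_perp_comp // (dot_grad nd) eqxx (negPf ac) subr0.
have uc_d : dot uc (grad d) = 0.
  by rewrite dot_perp_comp // (dot_grad nd) (negPf cd) (negPf ad) subrr.
have ud_d : dot ud (grad d) = 1.
  by rewrite dot_perp_comp // (dot_grad nd) eqxx (negPf ad) subr0.
have uc_ud : dot uc ud = dot uc (V d - V a) by rewrite dotC dot_perp_comp 1?dotC.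
have det_gt0 : 0 < gram c c * gram d d - gram c d ^+ 2 by rewrite subr_gt0 gram_cs.
rewrite obtuse_angleE ?(neq0 _ _ uc_c) ?(neq0 _ _ ud_d) // uc_ud.
by rewrite -(pmulr_llt0 _ det_gt0) (edge_orth_dual u uc_e uc_c uc_d) oppr_lt0.
Qed.

End ObtuseEdges.

Section Equilibrium.
Variables (R : realType) (V : 'I_4 -> 'rV[R]_3).
Hypothesis nd : tetra_nondegenerate V.
Local Notation grad := (grad V).
Local Notation gram := (gram V).
Local Notation bary := (bary V).

Definition foot_in_face (w : 'I_4 -> R) (i : 'I_4) : Prop :=
  forall j, j != i -> w i * gram i j < w j * gram i i.

Lemma foot_in_face_scale c w w' i : 0 < c -> (forall k, w' k = c * w k) ->
  foot_in_face w' i <-> foot_in_face w i.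
Proof.
by move=> c_gt0 w'E; split => foot j ji; move: (foot j ji); rewrite !w'E -!mulrA ltr_pM2l.
Qed.

Lemma supporting_plane_vertices Q x : (forall k, 0 <= bary Q k) ->
  (forall k, dot (V k - Q) x <= 0) -> forall k, 0 < bary Q k -> dot (V k - Q) x = 0.
Proof.
move=> Q_ge0 below k Qk.
have : \sum_l - (bary Q l * dot (V l - Q) x) = 0.
  under eq_bigr => l _ do rewrite -dotZl.
  by rewrite sumrN -dot_suml affine_sum ?bary_sum // -(bary_rec nd) subrr dot0l oppr0.
move/eqP; rewrite psumr_eq0 => [/allP/(_ k (mem_index_enum k))|l _].
  by rewrite oppr_eq0 mulf_eq0 (gt_eqF Qk) => /eqP.
by rewrite oppr_ge0 mulr_ge0_le0.
Qed.

Lemma face_normal i P x : (forall k, k != i -> dot (V k - P) x = 0) ->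
  x = dot (V i - P) x *: grad i.
Proof.
move=> on_face; have [a] := @exists_notin [:: i] isT; rewrite inE => ai.
have edge k : dot x (V k - V a) = dot (V k - P) x.
  have -> : V k - V a = (V k - P) - (V a - P) by rewrite opprB addrA subrK.
  by rewrite dotC dotBl (on_face a ai) subr0.
rewrite {1}(edge_coords nd x a) (bigD1 i) //= big1 ?addr0 ?edge // => k ki.
by rewrite edge on_face ?scale0r.
Qed.

Lemma equilibrium_foot O i : (forall k, 0 < bary O k) ->
  equilibrium_on_face V O i -> foot_in_face (bary O) i.
Proof.
move=> O_gt0 [Q [/(in_face_relintP nd)[Qi Q_gt0] [_ [_ support]]]].
have Q_ge0 k : 0 <= bary Q k.
  by have [->|ki] := eqVneq k i; [rewrite Qi | exact/ltW/Q_gt0].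
have on_face k : k != i -> dot (V k - Q) (Q - O) = 0.
  move=> ki; case: support => [below|above].
    by apply: supporting_plane_vertices (Q_gt0 k ki) => // l; apply/below/(vertex_in_tetra nd).
  apply/eqP; rewrite -oppr_eq0 -dotNr; apply/eqP.
  apply: supporting_plane_vertices (Q_gt0 k ki) => // l.
  by rewrite dotNr oppr_le0; apply/above/(vertex_in_tetra nd).
have := face_normal on_face; set t := dot _ (Q - O) => QO.
have bQ j : bary Q j = bary O j + t * gram i j.
  by rewrite -[bary Q j](subrK (bary O j)) -dot_grad_bary QO dotZl addrC.
move=> j ji; have := Q_gt0 j ji; move: Qi; rewrite !bQ => Qi.
have Gi := gram_gt0 nd i; nra.
Qed.

Lemma foot_equilibrium O i : (forall k, 0 < bary O k) ->
  foot_in_face (bary O) i -> equilibrium_on_face V O i.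
Proof.
move=> O_gt0 foot; have Gi := gram_gt0 nd i.
set t := - (bary O i / gram i i); set Q := O + t *: grad i.
have t_lt0 : t < 0 by rewrite oppr_lt0 divr_gt0.
have QO : Q - O = t *: grad i by rewrite addrC addKr.
have bQ j : bary Q j = bary O j + t * gram i j.
  by rewrite -[bary Q j](subrK (bary O j)) -dot_grad_bary QO dotZl addrC.
have Qi : bary Q i = 0 by rewrite bQ /t mulNr divfK ?subrr ?gt_eqF.
have Q_gt0 j : j != i -> 0 < bary Q j.
  by move=> ji; rewrite bQ /t mulNr mulrAC subr_gt0 ltr_pdivrMr // foot.
have Q_ge0 k : 0 <= bary Q k.
  by have [->|ki] := eqVneq k i; [rewrite Qi | exact/ltW/Q_gt0].
exists Q; split; first exact/(in_face_relintP nd).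
split; first by rewrite eq_sym -subr_eq0 QO scaler_eq0 negb_or lt_eqF ?grad_neq0.
split; first exact/(in_tetraP nd).
left=> P /(in_tetraP nd) P_ge0.
by rewrite QO dotZr dot_grad_bary Qi subr0 nmulr_rle0 ?P_ge0.
Qed.

Lemma equilibrium_on_faceE O i : (forall k, 0 < bary O k) ->
  equilibrium_on_face V O i <-> foot_in_face (bary O) i.
Proof. by move=> O_gt0; split; [exact: equilibrium_foot | exact: foot_equilibrium]. Qed.

End Equilibrium.

Definition ham_path (e : rel 'I_4) : Prop :=
  exists a b c d, [/\ uniq [:: a; b; c; d], e a b, e b c & e c d].

Section HamiltonianPath.
Variables (R : realDomainType) (e : rel 'I_4) (phi : 'I_4 -> R) (f : 'I_4).
Hypothesis e_sym : symmetric e.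
Hypothesis no_full_vertex : forall i, ~ (forall j, j != i -> e i j).
Hypothesis descent : forall g, g != f -> exists2 j, e g j & phi j < phi g.

Let no_star x a b c : uniq [:: x; a; b; c] -> e x a -> e x b -> e x c -> False.
Proof.
move=> u xa xb xc; apply: (@no_full_vertex x) => j jx.
have := mem_uniq4 j u; rewrite !inE.
by case/or4P => /eqP j_eq; move: jx; rewrite j_eq ?eqxx // => _.
Qed.

Let lower_neighbours m c d : uniq [:: f; m; c; d] ->
  (forall j, j != f -> phi j <= phi m) -> phi d <= phi c ->
  [/\ e d f, e c f \/ e c d & [\/ e m f, e m c | e m d]].
Proof.
move=> u m_max dc; have := u; rewrite /= !inE !negb_or.
move=> /and4P[/and3P[fm fc fd] _ _ _].
have [mf cf df] : [/\ m != f, c != f & d != f] by rewrite !(eq_sym _ f).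
have [jd d_jd jd_lt] := descent df; have [jc c_jc jc_lt] := descent cf.
have [jm m_jm jm_lt] := descent mf.
split.
- have := mem_uniq4 jd u; rewrite !inE => /or4P[]/eqP jd_eq; move: d_jd jd_lt; rewrite jd_eq //.
  + by rewrite ltNge m_max.
  + by rewrite ltNge dc.
  + by rewrite ltxx.
- have := mem_uniq4 jc u; rewrite !inE => /or4P[]/eqP jc_eq; move: c_jc jc_lt; rewrite jc_eq.
  + by left.
  + by rewrite ltNge m_max.
  + by rewrite ltxx.
  + by right.
- have := mem_uniq4 jm u; rewrite !inE => /or4P[]/eqP jm_eq; move: m_jm jm_lt; rewrite jm_eq.
  + by constructor 1.
  + by rewrite ltxx.
  + by constructor 2.
  + by constructor 3.
Qed.

(* Joining each vertex other than [f] to a lower neighbour gives three edges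
   without a cycle, i.e. a spanning tree; a spanning tree on four vertices
   without a vertex of degree three is a path. *)
Lemma descent_ham_path : ham_path e.
Proof.
have [g0] := @exists_notin [:: f] isT; rewrite inE => g0f.
case: (@arg_maxP _ _ 'I_4 g0 (fun i => i != f) phi g0f) => m mf m_max.
have [c] := @exists_notin [:: f; m] isT; have [d] := @exists_notin [:: f; m; c] isT.
rewrite !inE !negb_or => /and3P[df dm dc] /andP[cf cm].
wlog le_dc : c d cf cm df dm dc / phi d <= phi c.
  move=> wlog_dc; have [|/ltW] := leP (phi d) (phi c); first exact: wlog_dc.
  by apply: (wlog_dc d c); rewrite // eq_sym.
have u : uniq [:: f; m; c; d].
  by rewrite /= !inE !negb_or !(eq_sym f) mf cf df !(eq_sym m) cm dm (eq_sym c) dc.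
have perm_u s : (forall p : pred 'I_4, count p s = count p [:: f; m; c; d]) -> uniq s.
  exact: uniq4_perm u.
have [d_f [c_f|c_d] [m_f|m_c|m_d]] := lower_neighbours u m_max le_dc.
- by case: (no_star u); rewrite e_sym.
- exists m, c, f, d; split => //; last by rewrite e_sym.
  by apply: perm_u => p /=; ring.
- exists m, d, f, c; split => //; last by rewrite e_sym.
  by apply: perm_u => p /=; ring.
- exists m, f, d, c; split => //; try by rewrite e_sym.
  by apply: perm_u => p /=; ring.
- by exists m, c, d, f; split => //; apply: perm_u => p /=; ring.
- case: (@no_star d f m c) => //; try by rewrite e_sym.
  by apply: perm_u => p /=; ring.
Qed.

End HamiltonianPath.

Section Monostability.
Variables (R : realType) (V : 'I_4 -> 'rV[R]_3).
Hypothesis nd : tetra_nondegenerate V.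
Local Notation gram := (gram V).
Local Notation bary := (bary V).
Local Notation foot_in_face := (foot_in_face V).
Local Notation obtuse_graph := (fun i j => 0 < gram i j).

Lemma has_obtuse_pathE : has_obtuse_path V <-> ham_path obtuse_graph.
Proof.
split=> [[a [b [c [d [u [ab [bc cd]]]]]]] | [x1 [x2 [x3 [x4 [u e12 e23 e34]]]]]].
  have u_bc : uniq [:: b; c; a; d] by apply: (uniq4_perm u) => p /=; ring.
  have u_cd : uniq [:: c; d; a; b] by apply: (uniq4_perm u) => p /=; ring.
  move: ab bc cd; rewrite (obtuse_edgeE nd u) (obtuse_edgeE nd u_bc) (obtuse_edgeE nd u_cd).
  by move=> e_ab e_ad e_cd; exists c, d, a, b; split; rewrite // gram_sym.
have u_34 : uniq [:: x3; x4; x1; x2] by apply: (uniq4_perm u) => p /=; ring.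
have u_41 : uniq [:: x4; x1; x3; x2] by apply: (uniq4_perm u) => p /=; ring.
exists x3, x4, x1, x2; do !split=> //.
- exact/(obtuse_edgeE nd u_34).
- by apply/(obtuse_edgeE nd u_41); rewrite gram_sym.
- exact/(obtuse_edgeE nd u).
Qed.

Lemma gram_ratio_bound : exists2 K, 1 <= K & forall i j,
  gram i j < K * gram i i /\ (0 < gram i j -> gram i i <= K * gram i j).
Proof.
have [M1 M1_ge0 M1_ub] := finite_ubound (fun p : 'I_4 * 'I_4 => gram p.1 p.2 / gram p.1 p.1).
have [M2 M2_ge0 M2_ub] := finite_ubound (fun p : 'I_4 * 'I_4 => gram p.1 p.1 / gram p.1 p.2).
exists (1 + M1 + M2) => [|i j]; first by rewrite -addrA lerDl addr_ge0.
have Gi := gram_gt0 nd i; split => [|Gij].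
  have := M1_ub (i, j); rewrite /= ler_pdivrMr // => /le_lt_trans; apply.
  by rewrite ltr_pM2r //; lra.
have := M2_ub (i, j); rewrite /= ler_pdivrMr // => /le_trans; apply.
by rewrite ler_pM2r //; lra.
Qed.

Lemma monostable_of_weights f (w : 'I_4 -> R) : (forall i, 0 < w i) ->
  (forall g, foot_in_face w g <-> g = f) -> exists O, in_interior V O /\ monostable_on V O f.
Proof.
move=> w_gt0 foot_f; set W := \sum_i w i.
have W_gt0 : 0 < W by rewrite /W (bigD1 f) //= ltr_wpDr // sumr_ge0 // => i _; exact/ltW.
have w_sum : \sum_i W^-1 * w i = 1 by rewrite -mulr_sumr mulVf ?gt_eqF.
set O := \sum_i (W^-1 * w i) *: V i.
have bO i : bary O i = W^-1 * w i by apply: (bary_combP nd _ w_sum).1.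
have O_gt0 i : 0 < bary O i by rewrite bO mulr_gt0 ?invr_gt0.
exists O; split => [|g]; first exact/(in_interiorP nd).
rewrite (equilibrium_on_faceE nd _ O_gt0); apply: iff_trans (foot_f g).
by apply: (foot_in_face_scale V g _ bO); rewrite invr_gt0.
Qed.

Lemma monostable_of_levels f (n : 'I_4 -> nat) :
  (forall j, j != f -> (n f < n j)%N) ->
  (forall g, g != f -> exists2 j, 0 < gram g j & (n j < n g)%N) ->
  exists O, in_interior V O /\ monostable_on V O f.
Proof.
move=> n_min descent; have [K K_ge1 K_bound] := gram_ratio_bound.
have K_gt0 : 0 < K by lra.
have Kexp a b : (a < b)%N -> K ^+ a * K <= K ^+ b by move=> ab; rewrite -exprSr ler_weXn2l.
apply: (@monostable_of_weights f (fun i => K ^+ n i)) => [i|g]; first exact: exprn_gt0.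
split=> [foot_g|-> j jf]; last first.
  apply: lt_le_trans (_ : K ^+ n f * (K * gram f f) <= _).
    by rewrite ltr_pM2l ?exprn_gt0 //; case: (K_bound f j).
  by rewrite mulrA ler_pM2r ?gram_gt0 ?Kexp ?n_min.
apply/eqP; apply/negPn/negP => gf; have [j Ggj nj] := descent g gf.
have jg : j != g by apply: contraTneq nj => ->; rewrite ltnn.
have := foot_g j jg; rewrite ltNge => /negP; apply.
apply: le_trans (_ : K ^+ n j * (K * gram g j) <= _).
  by rewrite ler_pM2l ?exprn_gt0 //; case: (K_bound g j) => _; apply.
by rewrite mulrA ler_pM2r ?Kexp.
Qed.

Lemma monostable_on_path_end x1 x2 x3 x4 : uniq [:: x1; x2; x3; x4] ->
  0 < gram x1 x2 -> 0 < gram x2 x3 -> 0 < gram x3 x4 ->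
  exists O, in_interior V O /\ monostable_on V O x1.
Proof.
move=> u e12 e23 e34; have [n [n1 n2 n3 n4]] := fun_uniq4 0%N 1%N 2%N 3%N u.
apply: (@monostable_of_levels _ n) => [j|g].
  by have := mem_uniq4 j u; rewrite !inE => /or4P[]/eqP->; rewrite ?eqxx ?n1 ?n2 ?n3 ?n4.
have := mem_uniq4 g u; rewrite !inE => /or4P[]/eqP-> gx1; first by rewrite eqxx in gx1.
- by exists x1; rewrite 1?gram_sym ?n1 ?n2.
- by exists x2; rewrite 1?gram_sym ?n2 ?n3.
- by exists x3; rewrite 1?gram_sym ?n3 ?n4.
Qed.

Lemma monostable_on_path_second x1 x2 x3 x4 : uniq [:: x1; x2; x3; x4] ->
  0 < gram x1 x2 -> 0 < gram x2 x3 -> 0 < gram x3 x4 ->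
  exists O, in_interior V O /\ monostable_on V O x2.
Proof.
move=> u e12 e23 e34; have [n [n1 n2 n3 n4]] := fun_uniq4 1%N 0%N 1%N 2%N u.
apply: (@monostable_of_levels _ n) => [j|g].
  by have := mem_uniq4 j u; rewrite !inE => /or4P[]/eqP->; rewrite ?eqxx ?n1 ?n2 ?n3 ?n4.
have := mem_uniq4 g u; rewrite !inE => /or4P[]/eqP-> gx2;
  [|by rewrite eqxx in gx2|..].
- by exists x2; rewrite ?n1 ?n2.
- by exists x2; rewrite 1?gram_sym ?n2 ?n3.
- by exists x3; rewrite 1?gram_sym ?n3 ?n4.
Qed.

Lemma monostable_on_ham_path : ham_path obtuse_graph ->
  forall f, exists O, in_interior V O /\ monostable_on V O f.
Proof.
case=> [x1 [x2 [x3 [x4 [u e12 e23 e34]]]]] f.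
have u_rev : uniq [:: x4; x3; x2; x1] by apply: (uniq4_perm u) => p /=; ring.
have [e43 e32 e21] : [/\ 0 < gram x4 x3, 0 < gram x3 x2 & 0 < gram x2 x1].
  by split; rewrite gram_sym.
have := mem_uniq4 f u; rewrite !inE => /or4P[]/eqP->.
- exact: monostable_on_path_end u e12 e23 e34.
- exact: monostable_on_path_second u e12 e23 e34.
- exact: monostable_on_path_second u_rev e43 e32 e21.
- exact: monostable_on_path_end u_rev e43 e32 e21.
Qed.

(* [w i ^+ 2 / gram i i] is, up to the normalisation of [w], the squared
   distance from the point to the plane of face [i]. *)
Lemma descent_of_not_foot w g : (forall i, 0 < w i) -> ~ foot_in_face w g ->
  exists2 j, 0 < gram g j & w j ^+ 2 / gram j j < w g ^+ 2 / gram g g.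
Proof.
move=> w_gt0 not_foot.
have /existsP[j /andP[jg le_j]] :
    [exists j, (j != g) && (w j * gram g g <= w g * gram g j)].
  apply: contraT => /existsPn none; exfalso; apply: not_foot => j jg.
  by have := none j; rewrite jg /= -ltNge.
have Gg := gram_gt0 nd g; have wg := w_gt0 g.
have Ggj : 0 < gram g j.
  by rewrite -(pmulr_rgt0 _ wg); apply: lt_le_trans le_j; rewrite mulr_gt0.
exists j => //; rewrite ltr_pdivrMr ?gram_gt0 // mulrAC ltr_pdivlMr // -(ltr_pM2r Gg).
have sq_le : (w j * gram g g) * (w j * gram g g) <= (w g * gram g j) * (w g * gram g j).
  by apply: ler_pM => //; rewrite mulr_ge0 ?ltW.
have sq_lt : (w g * gram g j) * (w g * gram g j) < (w g * w g) * (gram g g * gram j j).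
  by rewrite mulrACA ltr_pM2l ?mulr_gt0 // -expr2 gram_cs // eq_sym.
have -> : w j ^+ 2 * gram g g * gram g g = (w j * gram g g) * (w j * gram g g) by ring.
have -> : w g ^+ 2 * gram j j * gram g g = (w g * w g) * (gram g g * gram j j) by ring.
exact: le_lt_trans sq_le sq_lt.
Qed.

Lemma ham_path_of_monostable :
  (exists O, in_interior V O /\ monostable V O) -> ham_path obtuse_graph.
Proof.
case=> O [/(in_interiorP nd) O_gt0 [f mono]].
apply: (@descent_ham_path _ _ (fun i => bary O i ^+ 2 / gram i i) f).
- by move=> i j; rewrite gram_sym.
- exact: gram_offdiag_not_pos nd.
- move=> g gf; apply: descent_of_not_foot => // /(foot_equilibrium nd O_gt0).
  by move/mono/eqP; rewrite (negPf gf).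
Qed.

End Monostability.

Theorem theorem1p3 (R : realType) (V : 'I_4 -> 'rV[R]_3) :
  tetra_nondegenerate V ->
  (has_obtuse_path V <-> exists O, in_interior V O /\ monostable V O) /\
  ((exists O, in_interior V O /\ monostable V O) <->
   (forall f : 'I_4, exists O, in_interior V O /\ monostable_on V O f)).
Proof.
move=> nd.
have every_face : has_obtuse_path V ->
    forall f, exists O, in_interior V O /\ monostable_on V O f.
  by move/(has_obtuse_pathE nd); exact: monostable_on_ham_path.
have obtuse : (exists O, in_interior V O /\ monostable V O) -> has_obtuse_path V.
  by move/(ham_path_of_monostable nd)/(has_obtuse_pathE nd).
have monostable_of_on : (forall f, exists O, in_interior V O /\ monostable_on V O f) ->
    exists O, in_interior V O /\ monostable V O.
  by move=> /(_ ord0) [O [O_int mono]]; exists O; split; last exists ord0.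
split; split.
- by move/every_face; exact: monostable_of_on.
- exact: obtuse.
- by move/obtuse; exact: every_face.
- exact: monostable_of_on.
Qed.
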